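(* If the probabilistic normed space $(\mathbb{R},\nu,\tau,\tau^* )$ (on the real line) is a topological vector space with respect to its strong topology, then it is strongly complete, i.e. every strongly Cauchy sequence in $\mathbb{R}$ strongly converges to a point of $\mathbb{R}$.
   Context: $\Delta^{+}$ is the set of functions $F:[-\infty,+\infty]\to[0,1]$ that are left-continuous on $\mathbb{R}$, nondecreasing, with $F(0)=0$ and $F(+\infty)=1$, ordered pointwise; $\varepsilon_0$ is the d.f. equal to $0$ for $x\le0$ and $1$ for $x>0$. A triangle function is a map $\tau:\Delta^+\times\Delta^+\to\Delta^+$ that is associative, commutative, nondecreasing in each argument, with unit $\varepsilon_0$. A PN space is a quadruple $(V,\nu,\tau,\tau^* )$ with $V$ a real vector space, $\tau\le\tau^*$ continuous triangle functions, and $\nu:V\to\Delta^+$ such that for all $p,q\in V$: (N1) $\nu_p=\varepsilon_0$ iff $p=\theta$; (N2) $\nu_{-p}=\nu_p$; (N3) $\nu_{p+q}\ge\tau(\nu_p,\nu_q)$; (N4) $\nu_p\le\tau^*(\nu_{\lambda p},\nu_{(1-\lambda)p})$ for all $\lambda\in[0,1]$. The strong topology is generated by the neighborhoods $N_p(\lambda)=\{q\in V:\nu_{p-q}(\lambda)>1-\lambda\}$, $\lambda>0$. A sequence $(p_n)$ strongly converges to $p$ if for every $\lambda>0$ there is $N$ with $p_n\in N_p(\lambda)$ for $n\ge N$; it is strongly Cauchy if for every $\lambda>0$ there is $N$ with $\nu_{p_n-p_m}(\lambda)>1-\lambda$ for all $m,n>N$. *)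

From Stdlib Require Import Reals.
Open Scope R_scope.

(* A distance distribution function F : [-oo,+oo] -> [0,1] in Delta^+ is
   represented by its restriction to R: the values F(-oo)=0 and F(+oo)=1 are
   forced, so the restriction determines F and the pointwise order on
   [-oo,+oo] coincides with the pointwise order on R. *)
Definition dfun := R -> R.

Definition in_Delta_plus (F : dfun) : Prop :=
  (forall x, 0 <= F x <= 1) /\
  (forall x y, x <= y -> F x <= F y) /\
  (forall x, forall eps, 0 < eps -> exists d, 0 < d /\
       forall y, x - d < y <= x -> Rabs (F y - F x) < eps) /\
  F 0 = 0.

Definition eps0 : dfun := fun x => if Rle_dec x 0 then 0 else 1.

Definition dfeq (F G : dfun) : Prop := forall x, F x = G x.
Definition dfle (F G : dfun) : Prop := forall x, F x <= G x.

(* weak convergence in Delta^+, i.e. convergence for the (modified Levy /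
   Sibley) metric topology of Delta^+ *)
Definition weak_cv (Fn : nat -> dfun) (F : dfun) : Prop :=
  forall x, 0 < x -> continuity_pt F x -> Un_cv (fun n => Fn n x) (F x).

Definition triangle_function (tau : dfun -> dfun -> dfun) : Prop :=
  (forall F G, in_Delta_plus F -> in_Delta_plus G -> in_Delta_plus (tau F G)) /\
  (forall F G H, in_Delta_plus F -> in_Delta_plus G -> in_Delta_plus H ->
     dfeq (tau F (tau G H)) (tau (tau F G) H)) /\
  (forall F G, in_Delta_plus F -> in_Delta_plus G -> dfeq (tau F G) (tau G F)) /\
  (forall F F' G, in_Delta_plus F -> in_Delta_plus F' -> in_Delta_plus G ->
     dfle F F' -> dfle (tau F G) (tau F' G)) /\
  (forall F, in_Delta_plus F -> dfeq (tau F eps0) F).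

(* continuity of tau on Delta^+ x Delta^+ (metrizable, so sequential) *)
Definition tf_continuous (tau : dfun -> dfun -> dfun) : Prop :=
  forall (Fn Gn : nat -> dfun) F G,
    (forall n, in_Delta_plus (Fn n)) -> (forall n, in_Delta_plus (Gn n)) ->
    in_Delta_plus F -> in_Delta_plus G ->
    weak_cv Fn F -> weak_cv Gn G -> weak_cv (fun n => tau (Fn n) (Gn n)) (tau F G).

Definition PN_space_R (nu : R -> dfun) (tau taus : dfun -> dfun -> dfun) : Prop :=
  triangle_function tau /\ triangle_function taus /\
  tf_continuous tau /\ tf_continuous taus /\
  (forall F G, in_Delta_plus F -> in_Delta_plus G -> dfle (tau F G) (taus F G)) /\
  (forall p, in_Delta_plus (nu p)) /\
  (forall p, dfeq (nu p) eps0 <-> p = 0) /\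
  (forall p, dfeq (nu (- p)) (nu p)) /\
  (forall p q, dfle (tau (nu p) (nu q)) (nu (p + q))) /\
  (forall p l, 0 <= l <= 1 -> dfle (nu p) (taus (nu (l * p)) (nu ((1 - l) * p)))).

Definition Nbd (nu : R -> dfun) (p l : R) (q : R) : Prop := nu (p - q) l > 1 - l.

Definition strong_open (nu : R -> dfun) (U : R -> Prop) : Prop :=
  forall p, U p -> exists l, 0 < l /\ forall q, Nbd nu p l q -> U q.

Definition usual_open (U : R -> Prop) : Prop :=
  forall a, U a -> exists e, 0 < e /\ forall b, Rabs (b - a) < e -> U b.

Definition strong_TVS (nu : R -> dfun) : Prop :=
  (forall W, strong_open nu W ->
     forall p q, W (p + q) ->
       exists A B, strong_open nu A /\ strong_open nu B /\ A p /\ B q /\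
         forall a b, A a -> B b -> W (a + b)) /\
  (forall W, strong_open nu W ->
     forall c p, W (c * p) ->
       exists A B, usual_open A /\ strong_open nu B /\ A c /\ B p /\
         forall a b, A a -> B b -> W (a * b)).

Definition strong_cv (nu : R -> dfun) (u : nat -> R) (p : R) : Prop :=
  forall l, 0 < l -> exists N, forall n, (n >= N)%nat -> Nbd nu p l (u n).

Definition strong_Cauchy (nu : R -> dfun) (u : nat -> R) : Prop :=
  forall l, 0 < l -> exists N, forall m n, (m > N)%nat -> (n > N)%nat ->
    nu (u n - u m) l > 1 - l.

Definition strongly_complete (nu : R -> dfun) : Prop :=
  forall u, strong_Cauchy nu u -> exists p, strong_cv nu u p.

(* The strong uniformity of (R, nu) coincides with the Euclidean one, so completeness of R
   transfers.  First, the neighbourhoods N_0(l) are strongly open (this uses the continuity of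
   tau), and continuity of scalar multiplication at (0, 1) puts a Euclidean ball inside N_0(l).
   Conversely, by (N1) the set {x | x <> 1} is strongly open, so continuity of scalar
   multiplication at (0, 0) gives d > 0 and a strong neighbourhood V of 0 with a b <> 1 whenever
   |a| < d and b is in V; hence V lies in [-1/d, 1/d], and continuity at (c, 0) for large c
   shrinks V into any Euclidean ball around 0. *)

From Stdlib Require Import Reals Lra Lia Classical ClassicalEpsilon.
Open Scope R_scope.

Definition step (a c : R) : dfun := fun x => if Rle_dec x a then 0 else c.

Lemma step_in_Delta_plus (a c : R) : 0 <= a -> 0 <= c <= 1 -> in_Delta_plus (step a c).
Proof.
  unfold step; intros Ha Hc; split; [|split; [|split]].
  - intro x; destruct (Rle_dec x a); lra.
  - intros x y Hxy; destruct (Rle_dec x a), (Rle_dec y a); lra.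
  - intros x eps Heps; destruct (Rle_dec x a) as [Hx|Hx].
    + exists 1; split; [lra|]; intros y Hy.
      destruct (Rle_dec y a); [|lra].
      rewrite Rminus_0_r, Rabs_R0; lra.
    + exists (x - a); split; [lra|]; intros y Hy.
      destruct (Rle_dec y a); [lra|].
      rewrite Rminus_diag, Rabs_R0; lra.
  - destruct (Rle_dec 0 a); lra.
Qed.

Lemma eps0_in_Delta_plus : in_Delta_plus eps0.
Proof. apply (step_in_Delta_plus 0 1); lra. Qed.

Lemma Delta_plus_left_approx (F : dfun) (l k : R) :
  in_Delta_plus F -> 0 < l -> F l > k -> exists a, 0 < a < l /\ F a > k.
Proof.
  intros [_ [_ [Hleft _]]] Hl Hk.
  destruct (Hleft l (F l - k)) as [d [Hd Hnear]]; [lra|].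
  exists (Rmax (l - d / 2) (l / 2)).
  assert (l - d / 2 <= Rmax (l - d / 2) (l / 2)) by apply Rmax_l.
  assert (l / 2 <= Rmax (l - d / 2) (l / 2)) by apply Rmax_r.
  assert (Rmax (l - d / 2) (l / 2) < l) by (apply Rmax_lub_lt; lra).
  specialize (Hnear (Rmax (l - d / 2) (l / 2)) ltac:(lra)).
  apply Rabs_def2 in Hnear; split; lra.
Qed.

Lemma eps0_of_forall_gt (F : dfun) :
  in_Delta_plus F -> (forall l, 0 < l -> F l > 1 - l) -> dfeq F eps0.
Proof.
  intros [Hbnd [Hmono [_ HF0]]] Hgt x; unfold eps0.
  specialize (Hbnd x); destruct (Rle_dec x 0) as [Hx|Hx].
  - pose proof (Hmono x 0 Hx); lra.
  - apply Rle_antisym; [lra|].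
    apply Rnot_lt_le; intro Hlt.
    set (l := Rmin x (1 - F x)).
    assert (l <= x) by apply Rmin_l.
    assert (l <= 1 - F x) by apply Rmin_r.
    assert (0 < l) by (apply Rmin_glb_lt; lra).
    pose proof (Hgt l ltac:(lra)); pose proof (Hmono l x ltac:(lra)); lra.
Qed.

Lemma weak_cv_const (F : dfun) : weak_cv (fun _ => F) F.
Proof.
  intros x _ _ eps Heps; exists 0%nat; intros n _.
  unfold Rdist; rewrite Rminus_diag, Rabs_R0; exact Heps.
Qed.

Lemma weak_cv_eps0 (Fn : nat -> dfun) :
  (forall n, in_Delta_plus (Fn n)) ->
  (forall e, 0 < e -> exists N, forall n, (n >= N)%nat -> Fn n e > 1 - e) ->
  weak_cv Fn eps0.
Proof.
  intros HD Hev x Hx _ eps Heps.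
  assert (Rmin x eps <= x) by apply Rmin_l.
  assert (Rmin x eps <= eps) by apply Rmin_r.
  destruct (Hev (Rmin x eps)) as [N HN]; [apply Rmin_glb_lt; lra|].
  exists N; intros n Hn; unfold Rdist, eps0.
  destruct (Rle_dec x 0); [lra|].
  destruct (HD n) as [Hbnd [Hmono _]].
  pose proof (HN n Hn); pose proof (Hbnd x); pose proof (Hmono (Rmin x eps) x ltac:(lra)).
  rewrite Rabs_left1; lra.
Qed.

Section StrongTopology.

Variable tau : dfun -> dfun -> dfun.
Hypothesis Htau : triangle_function tau.
Hypothesis Hcont : tf_continuous tau.

(* Compare [F] with a step function below it that jumps at some [a < l]: that step function is
   continuous at [l], where weak convergence can therefore be evaluated. *)
Lemma tau_gt_eventually (F : dfun) (Gn : nat -> dfun) (l k : R) :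
  in_Delta_plus F -> (forall n, in_Delta_plus (Gn n)) -> weak_cv Gn eps0 ->
  0 < l -> F l > k -> exists N, forall n, (n >= N)%nat -> tau F (Gn n) l > k.
Proof.
  destruct Htau as [_ [_ [_ [Hmono Hunit]]]].
  intros HF HGn HGcv Hl Hk.
  destruct (Delta_plus_left_approx F l k HF Hl Hk) as [a [Ha Hka]].
  pose proof HF as [Hbnd [HFmono _]].
  set (Fs := step a (F a)).
  assert (HFs : in_Delta_plus Fs) by (apply step_in_Delta_plus; [lra | apply Hbnd]).
  assert (HFsF : dfle Fs F).
  { intro x; unfold Fs, step; destruct (Rle_dec x a); [apply Hbnd | apply HFmono; lra]. }
  assert (HFsl : Fs l = F a) by (unfold Fs, step; destruct (Rle_dec l a); lra).
  assert (Hcont_l : continuity_pt (tau Fs eps0) l).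
  { apply (continuity_pt_locally_ext (fun _ => F a) _ (l - a)); [lra | |].
    2: apply continuity_pt_const; intros ? ?; reflexivity.
    intros y Hy; rewrite Hunit by exact HFs; unfold Fs, step, Rdist in *.
    apply Rabs_def2 in Hy; destruct (Rle_dec y a); lra. }
  destruct (Hcont (fun _ => Fs) Gn Fs eps0 (fun _ => HFs) HGn HFs eps0_in_Delta_plus
              (weak_cv_const Fs) HGcv l Hl Hcont_l (F a - k)) as [N HN]; [lra|].
  exists N; intros n Hn.
  specialize (HN n Hn); unfold Rdist in HN; apply Rabs_def2 in HN.
  rewrite Hunit in HN by exact HFs.
  pose proof (Hmono Fs F (Gn n) HFs HF (HGn n) HFsF l).
  lra.
Qed.

Variable nu : R -> dfun.
Hypothesis HD : forall p, in_Delta_plus (nu p).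
Hypothesis HN1 : forall p, dfeq (nu p) eps0 <-> p = 0.
Hypothesis HN3 : forall p q, dfle (tau (nu p) (nu q)) (nu (p + q)).

Lemma strong_open_Nbd (p l : R) : 0 < l -> strong_open nu (Nbd nu p l).
Proof.
  intros Hl q Hq; unfold Nbd in Hq.
  apply NNPP; intro Hnone.
  assert (Hbad : forall n : nat, exists r, Nbd nu q (/ INR (S n)) r /\ ~ Nbd nu p l r).
  { intro n; apply NNPP; intro Hn; apply Hnone.
    exists (/ INR (S n)); split; [apply Rinv_0_lt_compat, lt_0_INR; lia|].
    intros r Hr; apply NNPP; intro Hr'; apply Hn; exists r; auto. }
  destruct (choice _ Hbad) as [r Hr].
  set (Gn := fun n => nu (q - r n)).
  assert (HGcv : weak_cv Gn eps0).
  { apply weak_cv_eps0; [intro; apply HD|].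
    intros e He; destruct (archimed_cor1 e He) as [N [HN HN0]].
    exists N; intros n Hn.
    destruct (Hr n) as [Hrn _]; unfold Nbd, Gn in *.
    assert (/ INR (S n) <= / INR N).
    { apply Rinv_le_contravar; [apply lt_0_INR; lia | apply le_INR; lia]. }
    destruct (HD (q - r n)) as [_ [Hmono _]].
    pose proof (Hmono (/ INR (S n)) e ltac:(lra)); lra. }
  destruct (tau_gt_eventually (nu (p - q)) Gn l (1 - l) (HD _) (fun n => HD _) HGcv Hl Hq)
    as [N HN].
  destruct (Hr N) as [_ HrN]; apply HrN; unfold Nbd.
  specialize (HN N (le_n N)); pose proof (HN3 (p - q) (q - r N) l) as Htri.
  replace (p - q + (q - r N)) with (p - r N) in Htri by ring.
  unfold Gn in HN; lra.
Qed.

Lemma strong_open_neq (x : R) : strong_open nu (fun y => y <> x).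
Proof.
  intros p Hp.
  destruct (classic (exists l, 0 < l /\ nu (p - x) l <= 1 - l)) as [[l [Hl Hle]] | Hnone].
  - exists l; split; [exact Hl|]; intros q Hq ->; unfold Nbd in Hq; lra.
  - exfalso; apply Hp, Rminus_diag_uniq, HN1, eps0_of_forall_gt; [apply HD|].
    intros l Hl; apply Rnot_le_lt; intro Hle; apply Hnone; eauto.
Qed.

Hypothesis HTVS : strong_TVS nu.

Lemma strong_nbd_of_small (l : R) : 0 < l ->
  exists d, 0 < d /\ forall x, Rabs x < d -> Nbd nu 0 l x.
Proof.
  intros Hl; destruct HTVS as [_ Hscal].
  assert (H01 : Nbd nu 0 l (0 * 1)).
  { unfold Nbd; rewrite Rmult_0_l, Rminus_0_r, (proj2 (HN1 0) eq_refl).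
    unfold eps0; destruct (Rle_dec l 0); lra. }
  destruct (Hscal _ (strong_open_Nbd 0 l Hl) 0 1 H01) as [A [B [HA [_ [HA0 [HB1 HAB]]]]]].
  destruct (HA 0 HA0) as [d [Hd HAd]].
  exists d; split; [exact Hd|]; intros x Hx.
  rewrite <- (Rmult_1_r x); apply HAB; [apply HAd; rewrite Rminus_0_r; exact Hx | exact HB1].
Qed.

Lemma strong_nbd0_bounded :
  exists B M, strong_open nu B /\ B 0 /\ forall b, B b -> Rabs b <= M.
Proof.
  destruct HTVS as [_ Hscal].
  destruct (Hscal _ (strong_open_neq 1) 0 0 ltac:(rewrite Rmult_0_l; lra))
    as [A [B [HA [HB [HA0 [HB0 HAB]]]]]].
  destruct (HA 0 HA0) as [d [Hd HAd]].
  exists B, (/ d); split; [exact HB|]; split; [exact HB0|].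
  intros b Hb; apply Rnot_lt_le; intro Hbig.
  assert (Hbpos : 0 < Rabs b) by (pose proof (Rinv_0_lt_compat d Hd); lra).
  assert (Hb0 : b <> 0) by (intro E; rewrite E, Rabs_R0 in Hbpos; lra).
  refine (HAB (/ b) b _ Hb _); [|field; exact Hb0].
  apply HAd; rewrite Rminus_0_r, Rabs_inv, <- (Rinv_inv d).
  apply Rinv_lt_contravar; [apply Rmult_lt_0_compat; [apply Rinv_0_lt_compat |]; lra | exact Hbig].
Qed.

Lemma small_of_strong_nbd (eps : R) : 0 < eps ->
  exists l, 0 < l /\ forall x, Nbd nu 0 l x -> Rabs x < eps.
Proof.
  intros Heps; destruct HTVS as [_ Hscal].
  destruct strong_nbd0_bounded as [B [M [HB [HB0 HBM]]]].
  pose proof (HBM 0 HB0) as HM; rewrite Rabs_R0 in HM.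
  set (c := (M + 1) / eps).
  assert (Hc : 0 < c) by (unfold c; apply Rdiv_lt_0_compat; lra).
  destruct (Hscal B HB c 0 ltac:(rewrite Rmult_0_r; exact HB0))
    as [A' [B' [_ [HB' [HA'c [HB'0 HAB']]]]]].
  destruct (HB' 0 HB'0) as [l [Hl Hsmall]].
  exists l; split; [exact Hl|]; intros x Hx.
  pose proof (HBM _ (HAB' c x HA'c (Hsmall x Hx))) as Hcx.
  rewrite Rabs_mult, (Rabs_pos_eq c) in Hcx by lra.
  apply (Rmult_lt_reg_l c); [exact Hc|].
  replace (c * eps) with (M + 1) by (unfold c; field; lra).
  lra.
Qed.

Lemma strong_Cauchy_Cauchy_crit (u : nat -> R) : strong_Cauchy nu u -> Cauchy_crit u.
Proof.
  intros Hu eps Heps.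
  destruct (small_of_strong_nbd eps Heps) as [l [Hl Hsmall]].
  destruct (Hu l Hl) as [N HN]; exists (S N); intros n m Hn Hm.
  unfold Rdist; apply Hsmall; unfold Nbd.
  replace (0 - (u n - u m)) with (u m - u n) by ring; apply HN; lia.
Qed.

Lemma strong_cv_of_Un_cv (u : nat -> R) (p : R) : Un_cv u p -> strong_cv nu u p.
Proof.
  intros Hu l Hl.
  destruct (strong_nbd_of_small l Hl) as [d [Hd Hball]].
  destruct (Hu d Hd) as [N HN]; exists N; intros n Hn.
  pose proof (Hball (u n - p) (HN n Hn)) as Hnear; unfold Nbd in *.
  replace (p - u n) with (0 - (u n - p)) by ring; exact Hnear.
Qed.

End StrongTopology.

Theorem theorem14 (nu : R -> dfun) (tau taus : dfun -> dfun -> dfun) :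
  PN_space_R nu tau taus -> strong_TVS nu -> strongly_complete nu.
Proof.
  intros [Htau [_ [Hcont [_ [_ [HD [HN1 [_ [HN3 _]]]]]]]]] HTVS u Hu.
  destruct (R_complete u (strong_Cauchy_Cauchy_crit nu HD HN1 HTVS u Hu)) as [p Hp].
  exists p; exact (strong_cv_of_Un_cv tau Htau Hcont nu HD HN1 HN3 HTVS u p Hp).
Qed.
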